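(* Let $L>1$ and define $$\sigma_{0,2}=\frac{L+1}{L\ln L},\qquad \sigma_{1,2}=\frac{(L^2+1)+\sqrt{(L-1)^4+4L^2}}{2L(L-1)},$$ $$\sigma_{2,1}=\frac{(1+L^4)-\sqrt{(1+L^4)^2-4L(1+L^2)^2(1-L)^2}}{L(L-1)(1+L^2)}.$$ Then (1) $\sigma_{0,2}\le\sigma_{1,2}$ and (2) $\sigma_{2,1}\le\sigma_{0,2}$.
   Context: These are (for $n=2$) Steklov eigenvalues of the planar annulus $\{1<|x|<L\}$, but the claim is the stated inequality between the explicit expressions. *)

From Stdlib Require Import Reals.
Open Scope R_scope.

Definition sigma02 (L : R) : R := (L + 1) / (L * ln L).

Definition sigma12 (L : R) : R :=
  ((L ^ 2 + 1) + sqrt ((L - 1) ^ 4 + 4 * L ^ 2)) / (2 * L * (L - 1)).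

Definition sigma21 (L : R) : R :=
  ((1 + L ^ 4) - sqrt ((1 + L ^ 4) ^ 2 - 4 * L * (1 + L ^ 2) ^ 2 * (1 - L) ^ 2))
  / (L * (L - 1) * (1 + L ^ 2)).

(* Both inequalities reduce to the classical bounds
   2 (L - 1) / (L + 1) <= ln L <= (L^2 - 1) / (2 L)   for L >= 1.
   The lower bound gives sigma02 <= (L + 1)^2 / (2 L (L - 1)), which is what
   sigma12 becomes when its square root is replaced by the smaller 2 L; the
   upper bound gives 2 / (L - 1) <= sigma02, and replacing the square root in
   sigma21 by the smaller (L^2 + 1) (L - 1)^2 bounds sigma21 by 2 / (L - 1). *)

From Stdlib Require Import Reals Lra.
From Coquelicot Require Import Coquelicot.
Open Scope R_scope.

Lemma le_of_derive_nonneg (f f' : R -> R) (a b : R) :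
  a <= b ->
  (forall c, a <= c <= b -> is_derive f c (f' c)) ->
  (forall c, a < c < b -> 0 <= f' c) ->
  f a <= f b.
Proof.
  intros [hab | ->] hder hpos; [|lra].
  destruct (MVT_cor2 f f' a b hab) as [c [hmvt hc]].
  - intros c hc. apply is_derive_Reals, hder, hc.
  - pose proof (hpos c hc). nra.
Qed.

Lemma le_sqrt_of_sqr_le (a b : R) : 0 <= a -> a ^ 2 <= b -> a <= sqrt b.
Proof.
  intros ha hab. rewrite <- (sqrt_pow2 a ha). now apply sqrt_le_1_alt.
Qed.

Lemma ln_ge_2_sub1_div_add1 (x : R) : 1 <= x -> 2 * (x - 1) / (x + 1) <= ln x.
Proof.
  intros hx.
  assert (h := le_of_derive_nonneg (fun t => ln t - 2 * (t - 1) / (t + 1))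
                 (fun t => (t - 1) ^ 2 / (t * (t + 1) ^ 2)) 1 x hx).
  cbv beta in h. rewrite ln_1 in h.
  enough (0 <= ln x - 2 * (x - 1) / (x + 1)) by lra.
  replace 0 with (0 - 2 * (1 - 1) / (1 + 1)) by field.
  apply h.
  - intros c hc. auto_derive; [lra|]. field. lra.
  - intros c hc. apply Rdiv_le_0_compat; [apply pow2_ge_0|].
    apply Rmult_lt_0_compat; nra.
Qed.

Lemma ln_le_sqr_sub1_div (x : R) : 1 <= x -> ln x <= (x ^ 2 - 1) / (2 * x).
Proof.
  intros hx.
  assert (h := le_of_derive_nonneg (fun t => (t ^ 2 - 1) / (2 * t) - ln t)
                 (fun t => (t - 1) ^ 2 / (2 * t ^ 2)) 1 x hx).
  cbv beta in h. rewrite ln_1 in h.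
  enough (0 <= (x ^ 2 - 1) / (2 * x) - ln x) by lra.
  replace 0 with ((1 ^ 2 - 1) / (2 * 1) - 0) by field.
  apply h.
  - intros c hc. auto_derive; [lra|]. field. lra.
  - intros c hc. apply Rdiv_le_0_compat; [apply pow2_ge_0 | nra].
Qed.

Section Sigmas.

Variable L : R.
Hypothesis hL : 1 < L.

Lemma sigma02_le : sigma02 L <= (L + 1) ^ 2 / (2 * L * (L - 1)).
Proof.
  pose proof (ln_ge_2_sub1_div_add1 L (Rlt_le _ _ hL)) as hln.
  unfold sigma02.
  replace ((L + 1) ^ 2 / (2 * L * (L - 1)))
    with ((L + 1) / (L * (2 * (L - 1) / (L + 1)))) by (field; lra).
  apply Rmult_le_compat_l; [lra|].
  apply Rinv_le_contravar.
  - apply Rmult_lt_0_compat; [lra|]. apply Rdiv_lt_0_compat; lra.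
  - apply Rmult_le_compat_l; lra.
Qed.

Lemma sigma12_ge : (L + 1) ^ 2 / (2 * L * (L - 1)) <= sigma12 L.
Proof.
  assert (hsqrt : 2 * L <= sqrt ((L - 1) ^ 4 + 4 * L ^ 2)).
  { apply le_sqrt_of_sqr_le; [lra|].
    pose proof (pow2_ge_0 ((L - 1) ^ 2)). nra. }
  unfold sigma12, Rdiv. apply Rmult_le_compat_r.
  - left. apply Rinv_0_lt_compat. nra.
  - nra.
Qed.

Lemma sigma02_ge : 2 / (L - 1) <= sigma02 L.
Proof.
  pose proof (ln_le_sqr_sub1_div L (Rlt_le _ _ hL)) as hln.
  assert (hpos : 0 < ln L).
  { rewrite <- ln_1. apply ln_increasing; lra. }
  unfold sigma02.
  replace (2 / (L - 1)) with ((L + 1) / (L * ((L ^ 2 - 1) / (2 * L))))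
    by (field; split; nra).
  apply Rmult_le_compat_l; [lra|].
  apply Rinv_le_contravar.
  - apply Rmult_lt_0_compat; lra.
  - apply Rmult_le_compat_l; lra.
Qed.

Lemma sigma21_le : sigma21 L <= 2 / (L - 1).
Proof.
  assert (hsqrt : (L ^ 2 + 1) * (L - 1) ^ 2
                  <= sqrt ((1 + L ^ 4) ^ 2 - 4 * L * (1 + L ^ 2) ^ 2 * (1 - L) ^ 2)).
  { apply le_sqrt_of_sqr_le.
    - apply Rmult_le_pos; [nra | apply pow2_ge_0].
    - pose proof (pow2_ge_0 (L ^ 2)). nra. }
  assert (hden : 0 < L * (L - 1) * (1 + L ^ 2)) by (apply Rmult_lt_0_compat; nra).
  replace (2 / (L - 1)) with (2 * L * (1 + L ^ 2) / (L * (L - 1) * (1 + L ^ 2)))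
    by (field; split; nra).
  unfold sigma21, Rdiv. apply Rmult_le_compat_r.
  - left. now apply Rinv_0_lt_compat.
  - nra.
Qed.

End Sigmas.

Theorem lemma2p2 (L : R) (hL : 1 < L) :
  sigma02 L <= sigma12 L /\ sigma21 L <= sigma02 L.
Proof.
  split.
  - apply Rle_trans with (1 := sigma02_le L hL), sigma12_ge, hL.
  - apply Rle_trans with (1 := sigma21_le L hL), sigma02_ge, hL.
Qed.
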